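(* Let $\Gamma$ and $\Delta$ be LJB-contexts, $A$ a formula and $V$ a set of variables such that $A$ has no free variable in $V$. Let $\Sigma_1\vdash E_1$ be a flattening of the LJB-sequent $\Gamma,[\Delta]_V\vdash A$ and $\Sigma_2\vdash E_2$ a flattening of $[\Gamma]_V,[\Delta]_V\vdash A$. Then $\Sigma_1\vdash E_1$ and $\Sigma_2\vdash E_2$ are $\overline{\alpha}$-equivalent.
   Context: Formulas of minimal predicate logic: $A ::= P(t_1,\dots,t_n)\mid A\rightarrow A\mid \forall x\,A$ with first-order terms $t ::= x\mid f(t_1,\dots,t_n)$. LJ$^{+}$-sequent: finite multiset of formulas $\vdash$ formula. LJB-contexts and items: an LJB-context is a finite multiset of items; an item is a formula or $[\Gamma]_V$ with $V$ a finite set of variables (bound by the bracket) and $\Gamma$ an LJB-context; $FV([\Gamma]_V)=FV(\Gamma)\setminus V$. An LJB-sequent $\Gamma\vdash A$ is an LJB-context and a formula. A fresh $\alpha$-variant of an LJB-sequent is an $\alpha$-equivalent LJB-sequent (renaming variables bound by quantifiers or brackets) in which bound variables are pairwise distinct and distinct from free variables; a flattening of an LJB-sequent is an LJ$^{+}$-sequent obtained by erasing all brackets in a fresh $\alpha$-variant of it. Two LJ$^{+}$-sequents $\Gamma\vdash A$ and $\Gamma'\vdash A'$ are $\overline{\alpha}$-equivalent if there exist substitutions $\sigma,\sigma'$ (renamings of variables, so that the two sequents differ only by names of bound and free variables) such that $\sigma(\Gamma\vdash A)$ is $\alpha$-equivalent to $\Gamma'\vdash A'$ and $\sigma'(\Gamma'\vdash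 A')$ is $\alpha$-equivalent to $\Gamma\vdash A$. *)

From Stdlib Require Import List Arith PeanoNat Permutation.
Import ListNotations.

Definition var := nat.

(** First-order terms  t ::= x | f(t1,...,tn)  (function symbol named by a nat;
    the arity is the length of the argument list). *)
Inductive term : Type :=
| TVar : var -> term
| TFun : nat -> list term -> term.

Inductive formula : Type :=
| Atom : nat -> list term -> formula
| Imp : formula -> formula -> formula
| All : var -> formula -> formula.

(** LJB items: a formula, or [Gamma]_V with V a finite set of variables
    (represented by a list, read as a set) and Gamma an LJB-context.
    LJB-contexts are finite multisets of items, represented by lists
    (all notions below are invariant under permutation). *)
Inductive item : Type :=
| IForm : formula -> item
| IBrack : list var -> list item -> item.

Definition ljb_ctx := list item.
Definition ljb_seq := (ljb_ctx * formula)%type.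
(** LJ+ sequent: multiset (list up to permutation) of formulas |- formula. *)
Definition lj_seq := (list formula * formula)%type.

Fixpoint fv_term (t : term) : list var :=
  match t with
  | TVar x => [x]
  | TFun _ ts => flat_map fv_term ts
  end.

Fixpoint fv_form (A : formula) : list var :=
  match A with
  | Atom _ ts => flat_map fv_term ts
  | Imp A B => fv_form A ++ fv_form B
  | All x A => remove Nat.eq_dec x (fv_form A)
  end.

Fixpoint fv_item (i : item) : list var :=
  match i with
  | IForm A => fv_form A
  | IBrack V G => filter (fun x => negb (existsb (Nat.eqb x) V)) (flat_map fv_item G)
  end.

Definition fv_ljb_seq (S : ljb_seq) : list var :=
  flat_map fv_item (fst S) ++ fv_form (snd S).

(** All binding occurrences (with multiplicity): quantifiers and brackets. *)
Fixpoint bv_form (A : formula) : list var :=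
  match A with
  | Atom _ _ => []
  | Imp A B => bv_form A ++ bv_form B
  | All x A => x :: bv_form A
  end.

Fixpoint bv_item (i : item) : list var :=
  match i with
  | IForm A => bv_form A
  | IBrack V G => V ++ flat_map bv_item G
  end.

Definition bv_ljb_seq (S : ljb_seq) : list var :=
  flat_map bv_item (fst S) ++ bv_form (snd S).

(** rho: list of pairs of corresponding bound variables (innermost first).
    With the empty list, free variables must coincide. *)
Fixpoint aeq_var (rho : list (var * var)) (x y : var) : Prop :=
  match rho with
  | [] => x = y
  | (a, b) :: rho' => (x = a /\ y = b) \/ (x <> a /\ y <> b /\ aeq_var rho' x y)
  end.

Fixpoint aeq_term (rho : list (var * var)) (t u : term) : Prop :=
  match t, u with
  | TVar x, TVar y => aeq_var rho x y
  | TFun f ts, TFun g us =>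
      f = g /\
      (fix go (ts us : list term) : Prop :=
         match ts, us with
         | [], [] => True
         | t :: ts', u :: us' => aeq_term rho t u /\ go ts' us'
         | _, _ => False
         end) ts us
  | _, _ => False
  end.

Fixpoint aeq_form (rho : list (var * var)) (A B : formula) : Prop :=
  match A, B with
  | Atom P ts, Atom Q us => P = Q /\ Forall2 (aeq_term rho) ts us
  | Imp A1 A2, Imp B1 B2 => aeq_form rho A1 B1 /\ aeq_form rho A2 B2
  | All x A', All y B' => aeq_form ((x, y) :: rho) A' B'
  | _, _ => False
  end.

Definition bij_on (ps : list (var * var)) (V1 V2 : list var) : Prop :=
  NoDup (map fst ps) /\ NoDup (map snd ps) /\
  (forall x, In x V1 <-> In x (map fst ps)) /\
  (forall y, In y V2 <-> In y (map snd ps)).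

Inductive aeq_item : list (var * var) -> item -> item -> Prop :=
| aeq_IForm rho A B :
    aeq_form rho A B -> aeq_item rho (IForm A) (IForm B)
| aeq_IBrack rho V1 V2 G1 G2 G2' ps :
    bij_on ps V1 V2 ->
    Permutation G2 G2' ->
    Forall2 (aeq_item (ps ++ rho)) G1 G2' ->
    aeq_item rho (IBrack V1 G1) (IBrack V2 G2).

Definition aeq_ljb_seq (S S' : ljb_seq) : Prop :=
  exists G', Permutation (fst S') G' /\
    Forall2 (aeq_item []) (fst S) G' /\ aeq_form [] (snd S) (snd S').

Definition aeq_lj_seq (S S' : lj_seq) : Prop :=
  exists G', Permutation (fst S') G' /\
    Forall2 (aeq_form []) (fst S) G' /\ aeq_form [] (snd S) (snd S').

Definition fresh_alpha_variant (S S' : ljb_seq) : Prop :=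
  aeq_ljb_seq S S' /\
  NoDup (bv_ljb_seq S') /\
  (forall x, In x (bv_ljb_seq S') -> ~ In x (fv_ljb_seq S')).

Fixpoint erase_item (i : item) : list formula :=
  match i with
  | IForm A => [A]
  | IBrack _ G => flat_map erase_item G
  end.

Definition erase_ctx (G : ljb_ctx) : list formula := flat_map erase_item G.

Definition flattening (S : ljb_seq) (T : lj_seq) : Prop :=
  exists S', fresh_alpha_variant S S' /\
    Permutation (fst T) (erase_ctx (fst S')) /\ snd T = snd S'.

Definition upd (s : var -> var) (x z : var) : var -> var :=
  fun v => if Nat.eqb v x then z else s v.

Fixpoint subst_term (s : var -> var) (t : term) : term :=
  match t with
  | TVar x => TVar (s x)
  | TFun f ts => TFun f (map (subst_term s) ts)
  end.

(** Bound variables are renamed to a variable larger than every image of a free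
    variable, so that no capture occurs. *)
Fixpoint subst_form (s : var -> var) (A : formula) : formula :=
  match A with
  | Atom P ts => Atom P (map (subst_term s) ts)
  | Imp A B => Imp (subst_form s A) (subst_form s B)
  | All x A' =>
      let z := S (list_max (map s (remove Nat.eq_dec x (fv_form A')))) in
      All z (subst_form (upd s x z) A')
  end.

Definition subst_lj_seq (s : var -> var) (S : lj_seq) : lj_seq :=
  (map (subst_form s) (fst S), subst_form s (snd S)).

Definition abar_equiv (S S' : lj_seq) : Prop :=
  exists s s' : var -> var,
    aeq_lj_seq (subst_lj_seq s S) S' /\ aeq_lj_seq (subst_lj_seq s' S') S.

From Stdlib Require Import List.
Import ListNotations.
From Stdlib Require Import PeanoNat Permutation Relations ClassicalEpsilon Lia.

(* Both flattenings erase fresh α-variants whose items are α-equivalent to those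
   of the original contexts.  They differ only in that, in the second one, the
   free variables of Γ lying in V have been renamed by the bijection with which
   the bracket [Γ]_V was α-renamed; A and the items of [Δ]_V have no free
   variable in V.  Hence one renaming carries each flattening onto the other:
   on the bound variables of the variant it follows the α-equivalence of the
   items, on V it follows that bijection (or its inverse), and elsewhere it is
   the identity.  Freshness of the variants makes this relation a function. *)

(** * α-equivalence up to a relation on free variables *)

Definition ext_pair (R : relation var) (a b : var) : relation var :=
  fun u v => (u = a /\ v = b) \/ (u <> a /\ v <> b /\ R u v).

Definition ext_bracket (V1 V2 : list var) (C R : relation var) : relation var :=
  fun u v => C u v \/ (~ In u V1 /\ ~ In v V2 /\ R u v).

Definition compR (R1 R2 : relation var) : relation var :=
  fun u w => exists v, R1 u v /\ R2 v w.

Definition functional (R : relation var) : Prop :=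
  forall u v1 v2, R u v1 -> R u v2 -> v1 = v2.

Definition partial_bij (C : relation var) (V1 V2 : list var) : Prop :=
  (forall u v, C u v -> In u V1 /\ In v V2) /\ functional C /\ functional (transp var C).

Fixpoint term_ind_nested (P : term -> Prop) (HV : forall x, P (TVar x))
  (HF : forall f ts, Forall P ts -> P (TFun f ts)) (t : term) : P t :=
  match t with
  | TVar x => HV x
  | TFun f ts => HF f ts ((fix go (ts : list term) : Forall P ts :=
       match ts with
       | [] => Forall_nil _
       | t :: ts' => Forall_cons _ (term_ind_nested P HV HF t) (go ts')
       end) ts)
  end.

Fixpoint item_ind_nested (P : item -> Prop) (HF : forall A, P (IForm A))
  (HB : forall V G, Forall P G -> P (IBrack V G)) (i : item) : P i :=
  match i with
  | IForm A => HF A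
  | IBrack V G => HB V G ((fix go (G : list item) : Forall P G :=
       match G with
       | [] => Forall_nil _
       | i :: G' => Forall_cons _ (item_ind_nested P HF HB i) (go G')
       end) G)
  end.

(* α-equivalence relating the free variables of the two sides by an arbitrary
   relation [R] ([aeq_form rho] is the case [R = rho_rel rho eq], see
   [aeq_form_iff]); unlike [rho], a relation can be weakened, inverted and
   composed. *)
Inductive alpha_term (R : relation var) : term -> term -> Prop :=
| alpha_TVar x y : R x y -> alpha_term R (TVar x) (TVar y)
| alpha_TFun f ts us : Forall2 (alpha_term R) ts us -> alpha_term R (TFun f ts) (TFun f us).

Fixpoint alpha_form (R : relation var) (A B : formula) {struct A} : Prop :=
  match A, B with
  | Atom P ts, Atom Q us => P = Q /\ Forall2 (alpha_term R) ts us
  | Imp A1 A2, Imp B1 B2 => alpha_form R A1 B1 /\ alpha_form R A2 B2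
  | All x A', All y B' => alpha_form (ext_pair R x y) A' B'
  | _, _ => False
  end.

Inductive alpha_item : relation var -> item -> item -> Prop :=
| alpha_IForm R A B : alpha_form R A B -> alpha_item R (IForm A) (IForm B)
| alpha_IBrack R V1 V2 G1 G2 G2' C :
    partial_bij C V1 V2 -> Permutation G2 G2' ->
    Forall2 (alpha_item (ext_bracket V1 V2 C R)) G1 G2' ->
    alpha_item R (IBrack V1 G1) (IBrack V2 G2).

Lemma Forall2_impl_Forall {A B} (P : A -> Prop) (Q Q' : A -> B -> Prop) l1 l2 :
  Forall P l1 -> Forall2 Q l1 l2 -> (forall a b, P a -> Q a b -> Q' a b) ->
  Forall2 Q' l1 l2.
Proof. intros HP HQ H. induction HQ; inversion HP; subst; constructor; auto. Qed.

Lemma Forall2_trans_Forall {A B C} (P : A -> Prop) (Q1 : A -> B -> Prop)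
  (Q2 : B -> C -> Prop) (Q3 : A -> C -> Prop) l1 l2 l3 :
  Forall P l1 -> Forall2 Q1 l1 l2 -> Forall2 Q2 l2 l3 ->
  (forall a b c, P a -> Q1 a b -> Q2 b c -> Q3 a c) -> Forall2 Q3 l1 l3.
Proof.
  intros HP H1. revert l3.
  induction H1; intros l3 H2 HH; inversion H2; subst; inversion HP; subst; constructor; eauto.
Qed.

Lemma Forall2_from_common {A B C} (P : A -> B -> Prop) (Q : A -> C -> Prop) l l1 l2 :
  Forall2 P l l1 -> Forall2 Q l l2 -> Forall2 (fun b c => exists a, P a b /\ Q a c) l1 l2.
Proof. intros H1. revert l2. induction H1; intros l2 H2; inversion H2; subst; constructor; eauto. Qed.

Lemma NoDup_app_disjoint {A} (l m : list A) a : NoDup (l ++ m) -> In a l -> In a m -> False.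
Proof.
  induction l; simpl; [tauto|]. intros Hn [<-|Hl] Hm; inversion Hn; subst.
  - apply H1. apply in_or_app; auto.
  - eauto.
Qed.

Lemma Forall2_In_l {A B} (P : A -> B -> Prop) l1 l2 a :
  Forall2 P l1 l2 -> In a l1 -> exists b, In b l2 /\ P a b.
Proof.
  induction 1; simpl; [tauto|]. intros [<-|H1]; [eauto|].
  destruct (IHForall2 H1) as [b [? ?]]; eauto.
Qed.

Lemma ext_pair_mono R R' a b : inclusion var R R' -> inclusion var (ext_pair R a b) (ext_pair R' a b).
Proof. unfold inclusion, ext_pair; firstorder. Qed.

Lemma ext_bracket_mono V1 V2 C R R' :
  inclusion var R R' -> inclusion var (ext_bracket V1 V2 C R) (ext_bracket V1 V2 C R').
Proof. unfold inclusion, ext_bracket; firstorder. Qed.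

Lemma alpha_term_mono t : forall R R' u, inclusion var R R' -> alpha_term R t u -> alpha_term R' t u.
Proof.
  induction t using term_ind_nested; intros R R' u HS Ht; inversion Ht; subst; constructor.
  - apply HS; assumption.
  - eapply Forall2_impl_Forall; eauto.
Qed.

Lemma alpha_form_mono A : forall R R' B, inclusion var R R' -> alpha_form R A B -> alpha_form R' A B.
Proof.
  induction A; intros R R' B HS H; destruct B; simpl in *; try tauto.
  - destruct H; split; auto. eapply Forall2_impl; [|eauto]. intros; eapply alpha_term_mono; eauto.
  - destruct H; split; eauto.
  - eapply IHA; [|eauto]. apply ext_pair_mono; auto.
Qed.

Lemma alpha_item_mono i : forall R R' j, inclusion var R R' -> alpha_item R i j -> alpha_item R' i j.
Proof.
  induction i using item_ind_nested; intros R R' j HS Hij; inversion Hij; subst.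
  - constructor; eapply alpha_form_mono; eauto.
  - econstructor; eauto. eapply Forall2_impl_Forall; eauto. simpl; intros a b Ha Hab.
    eapply Ha; [|eauto]. apply ext_bracket_mono; auto.
Qed.

Lemma alpha_term_transp t : forall R u, alpha_term R t u -> alpha_term (transp var R) u t.
Proof.
  induction t using term_ind_nested; intros R u Ht; inversion Ht; subst; constructor.
  - auto.
  - apply Forall2_flip. eapply Forall2_impl_Forall; eauto.
Qed.

Lemma alpha_form_transp A : forall R B, alpha_form R A B -> alpha_form (transp var R) B A.
Proof.
  induction A; intros R B H; destruct B; simpl in *; try tauto.
  - destruct H; split; auto. apply Forall2_flip.
    eapply Forall2_impl; [|eauto]. intros; eapply alpha_term_transp; eauto.
  - destruct H; split; eauto.
  - eapply alpha_form_mono; [|apply IHA; eauto]. unfold inclusion, transp, ext_pair; firstorder.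
Qed.

Lemma partial_bij_transp C V1 V2 : partial_bij C V1 V2 -> partial_bij (transp var C) V2 V1.
Proof. unfold partial_bij, transp, functional; firstorder. Qed.

Lemma alpha_item_transp i : forall R j, alpha_item R i j -> alpha_item (transp var R) j i.
Proof.
  induction i using item_ind_nested; intros R j Hij; inversion Hij; subst.
  - constructor; apply alpha_form_transp; auto.
  - assert (HF : Forall2 (fun b a => alpha_item (transp var (ext_bracket V V2 C R)) b a) G2' G).
    { apply Forall2_flip. eapply Forall2_impl_Forall; eauto. }
    destruct (Permutation_Forall2 (Permutation_sym H4) HF) as [G1' [HP HF']].
    econstructor; [apply partial_bij_transp; eauto|exact HP|].
    eapply Forall2_impl; [|exact HF']. intros a b Hab. eapply alpha_item_mono; [|exact Hab].
    unfold inclusion, transp, ext_bracket; firstorder.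
Qed.

Lemma alpha_term_comp t : forall R1 R2 u w,
  alpha_term R1 t u -> alpha_term R2 u w -> alpha_term (compR R1 R2) t w.
Proof.
  induction t using term_ind_nested; intros R1 R2 u w H1 H2; inversion H1; subst;
    inversion H2; subst; constructor.
  - exists y; auto.
  - eapply Forall2_trans_Forall; eauto.
Qed.

Lemma alpha_form_comp A : forall R1 R2 B C,
  alpha_form R1 A B -> alpha_form R2 B C -> alpha_form (compR R1 R2) A C.
Proof.
  induction A; intros R1 R2 B C H1 H2; destruct B; simpl in *; try tauto;
    destruct C; simpl in *; try tauto.
  - destruct H1, H2; split; [congruence|].
    eapply Forall2_trans_Forall with (P := fun _ => True); eauto.
    + apply Forall_forall; auto.
    + intros; eapply alpha_term_comp; eauto.
  - destruct H1, H2; split; eauto.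
  - eapply alpha_form_mono; [|eapply IHA; eauto].
    unfold inclusion, compR, ext_pair; intros u w [x [Hx Hy]].
    destruct Hx as [[-> ->]|[? [? ?]]]; destruct Hy as [[? ->]|[? [? ?]]]; try congruence; eauto.
    right; repeat split; eauto.
Qed.

Lemma partial_bij_comp C1 C2 V1 V2 V3 :
  partial_bij C1 V1 V2 -> partial_bij C2 V2 V3 -> partial_bij (compR C1 C2) V1 V3.
Proof.
  intros [Hd1 [Hf1 Hi1]] [Hd2 [Hf2 Hi2]]. unfold partial_bij, functional, transp, compR in *.
  split; [|split].
  - intros u w [v [? ?]]. split; [apply (Hd1 u v)|apply (Hd2 v w)]; auto.
  - intros u w1 w2 [v1 [? ?]] [v2 [? ?]]. assert (v1 = v2) by eauto. subst. eauto.
  - intros w u1 u2 [v1 [? ?]] [v2 [? ?]]. assert (v1 = v2) by eauto. subst. eauto.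
Qed.

Lemma alpha_item_comp i : forall R1 R2 j k,
  alpha_item R1 i j -> alpha_item R2 j k -> alpha_item (compR R1 R2) i k.
Proof.
  induction i using item_ind_nested; intros R1 R2 j k H1 H2; inversion H1; subst;
    inversion H2; subst.
  - constructor; eapply alpha_form_comp; eauto.
  - destruct (Permutation_Forall2 H6 H11) as [G3 [HP3 HF3]].
    econstructor; [eapply partial_bij_comp; eauto|eapply Permutation_trans; eauto|].
    eapply Forall2_trans_Forall; eauto. simpl. intros a b c Ha Hab Hbc.
    eapply alpha_item_mono; [|eapply Ha; eauto].
    destruct H4 as [Hd1 _], H5 as [Hd2 _].
    unfold inclusion, compR, ext_bracket; intros u w [v [Hx Hy]].
    destruct Hx as [Hc|[? [? ?]]].
    + destruct (Hd1 _ _ Hc). destruct Hy as [Hc'|[? [? ?]]]; [left; eauto|tauto].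
    + destruct Hy as [Hc'|[? [? ?]]]; [destruct (Hd2 _ _ Hc'); tauto|].
      right; repeat split; eauto.
Qed.
Lemma in_le_list_max x l : In x l -> x <= list_max l.
Proof.
  intros H. assert (Hf := proj1 (list_max_le l (list_max l)) (le_n _)).
  rewrite Forall_forall in Hf; auto.
Qed.

Lemma in_filter_notin x V l :
  In x (filter (fun x => negb (existsb (Nat.eqb x) V)) l) <-> In x l /\ ~ In x V.
Proof.
  rewrite filter_In, Bool.negb_true_iff, <- Bool.not_true_iff_false, existsb_exists.
  split; intros [H1 H2]; split; auto.
  - intros Hx. apply H2. exists x. split; auto. apply Nat.eqb_refl.
  - intros [y [Hy Hxy]]. apply Nat.eqb_eq in Hxy; subst; tauto.
Qed.

Lemma alpha_term_fv t : forall R u x,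
  alpha_term R t u -> In x (fv_term t) -> exists w, R x w /\ In w (fv_term u).
Proof.
  induction t using term_ind_nested; intros R u y Ht Hy; inversion Ht; subst; simpl in *.
  - destruct Hy as [<-|[]]. eauto.
  - apply in_flat_map in Hy as [t [Ht' Hyt]].
    destruct (Forall2_In_l _ _ _ _ H3 Ht') as [t' [Ht'' Htt']].
    rewrite Forall_forall in H. destruct (H t Ht' _ _ _ Htt' Hyt) as [w [? ?]].
    exists w; split; auto. apply in_flat_map; eauto.
Qed.

Lemma alpha_form_fv A : forall R B x,
  alpha_form R A B -> In x (fv_form A) -> exists w, R x w /\ In w (fv_form B).
Proof.
  induction A; intros R B y H Hy; destruct B; simpl in *; try tauto.
  - destruct H as [_ H]. apply in_flat_map in Hy as [t [Ht Hyt]].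
    destruct (Forall2_In_l _ _ _ _ H Ht) as [t' [Ht' Htt']].
    destruct (alpha_term_fv _ _ _ _ Htt' Hyt) as [w [? ?]].
    exists w; split; auto. apply in_flat_map; eauto.
  - destruct H as [H1 H2]. apply in_app_or in Hy as [Hy|Hy].
    + destruct (IHA1 _ _ _ H1 Hy) as [w [? ?]]. exists w; split; auto. apply in_or_app; auto.
    + destruct (IHA2 _ _ _ H2 Hy) as [w [? ?]]. exists w; split; auto. apply in_or_app; auto.
  - apply in_remove in Hy as [Hy Hne]. destruct (IHA _ _ _ H Hy) as [w [Hw Hin]].
    destruct Hw as [[? ?]|[? [? ?]]]; [congruence|].
    exists w; split; auto. apply in_in_remove; auto.
Qed.

Lemma alpha_term_subst t : forall R R' s u, alpha_term R t u ->
  (forall x y, In x (fv_term t) -> R x y -> R' (s x) y) -> alpha_term R' (subst_term s t) u.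
Proof.
  induction t using term_ind_nested; intros R R' s u Ht Hc; inversion Ht; subst; simpl.
  - constructor. apply Hc; simpl; auto.
  - constructor. clear Ht. revert H Hc; induction H3 as [|? ? ? ? Hxy ? IHHF]; intros HFa Hc;
      simpl; constructor; inversion HFa as [|? ? Hh Ht']; subst.
    + eapply Hh; eauto. intros; apply Hc; simpl; auto. apply in_or_app; auto.
    + apply IHHF; auto. intros; apply Hc; simpl in *; auto. apply in_or_app; auto.
Qed.

(* The binder chosen by [subst_form] exceeds every image of a free variable,
   so it is never captured. *)
Lemma alpha_form_subst A : forall R R' s B, alpha_form R A B ->
  (forall x y, In x (fv_form A) -> R x y -> R' (s x) y) -> alpha_form R' (subst_form s A) B.
Proof.
  induction A; intros R R' s B H Hc; destruct B; simpl in *; try tauto.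
  - destruct H as [? H]; split; auto. clear -H Hc. induction H; simpl; constructor.
    + eapply alpha_term_subst; eauto. intros; apply Hc; simpl; auto. apply in_or_app; auto.
    + apply IHForall2. intros; apply Hc; simpl; auto. apply in_or_app; auto.
  - destruct H; split; [eapply IHA1|eapply IHA2]; eauto; intros; apply Hc; auto;
      apply in_or_app; auto.
  - eapply IHA; eauto. intros x y Hx Hxy. unfold ext_pair, upd in *.
    destruct Hxy as [[-> ->]|[Hn [Hn' HR]]].
    + rewrite Nat.eqb_refl. left; auto.
    + apply Nat.eqb_neq in Hn as Hb. rewrite Hb. right. repeat split; auto.
      * intros Heq. assert (Hin : In (s x) (map s (remove Nat.eq_dec v (fv_form A)))).
        { apply in_map. apply in_in_remove; auto. }
        apply in_le_list_max in Hin. lia.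
      * apply Hc; auto. apply in_in_remove; auto.
Qed.

(** * Comparison with [aeq] *)

Fixpoint rho_rel (rho : list (var * var)) (R0 : relation var) : relation var :=
  match rho with
  | [] => R0
  | (a, b) :: rho' => ext_pair (rho_rel rho' R0) a b
  end.

Lemma aeq_var_iff rho x y : aeq_var rho x y <-> rho_rel rho eq x y.
Proof. induction rho as [|[a b] r IH]; simpl; [tauto|]. unfold ext_pair. rewrite IH. tauto. Qed.

Lemma aeq_term_iff t : forall rho u, aeq_term rho t u <-> alpha_term (rho_rel rho eq) t u.
Proof.
  induction t using term_ind_nested; intros rho u; destruct u; simpl.
  - rewrite aeq_var_iff. split; intros Hh; [constructor; auto|inversion Hh; auto].
  - split; intros Hh; [tauto|inversion Hh].
  - split; intros Hh; [tauto|inversion Hh].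
  - split.
    + intros [-> Hg]. constructor. revert l Hg.
      induction H as [|t ts Ht Hts IH]; intros l Hg; destruct l; try tauto; constructor.
      * apply Ht. tauto.
      * apply IH. tauto.
    + intros Hh. inversion Hh as [|? ? ? Hg]; subst. split; auto. clear Hh.
      revert l Hg. induction H as [|t ts Ht Hts IH]; intros l Hg; destruct l;
        inversion Hg; subst; auto.
      split; [apply Ht|apply IH]; auto.
Qed.

Lemma aeq_form_iff A : forall rho B, aeq_form rho A B <-> alpha_form (rho_rel rho eq) A B.
Proof.
  induction A; intros rho B; destruct B; simpl; try tauto.
  - split; intros [-> Hh]; split; auto; (eapply Forall2_impl; [|exact Hh]);
      intros; apply aeq_term_iff; auto.
  - rewrite IHA1, IHA2; tauto.
  - rewrite IHA. simpl. tauto.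
Qed.

Lemma rho_rel_app_incl ps rho R0 :
  inclusion var (rho_rel (ps ++ rho) R0)
    (fun u v => In (u, v) ps \/ (~ In u (map fst ps) /\ ~ In v (map snd ps) /\ rho_rel rho R0 u v)).
Proof.
  induction ps as [|[a b] ps IH]; simpl; intros u v; [tauto|]. unfold ext_pair.
  intros [[-> ->]|[Ha [Hb Hr]]]; [auto|]. destruct (IH u v Hr) as [?|[? [? ?]]]; [auto|].
  right; repeat split; auto; intros [?|?]; auto.
Qed.

Lemma NoDup_map_fst_functional {A B} (ps : list (A * B)) a b1 b2 :
  NoDup (map fst ps) -> In (a, b1) ps -> In (a, b2) ps -> b1 = b2.
Proof.
  induction ps as [|[x y] ps IH]; simpl; [tauto|]. intros Hn H1 H2. inversion Hn; subst.
  destruct H1 as [H1|H1]; destruct H2 as [H2|H2]; try congruence.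
  - inversion H1; subst. exfalso. apply (in_map fst) in H2; auto.
  - inversion H2; subst. exfalso. apply (in_map fst) in H1; auto.
  - eauto.
Qed.

Lemma NoDup_map_snd_functional {A B} (ps : list (A * B)) a1 a2 b :
  NoDup (map snd ps) -> In (a1, b) ps -> In (a2, b) ps -> a1 = a2.
Proof.
  intros Hn H1 H2. set (swap := fun p : A * B => (snd p, fst p)).
  apply (NoDup_map_fst_functional (map swap ps) b).
  - rewrite map_map. exact Hn.
  - exact (in_map swap _ _ H1).
  - exact (in_map swap _ _ H2).
Qed.

Lemma bij_on_partial_bij ps V1 V2 :
  bij_on ps V1 V2 -> partial_bij (fun u v => In (u, v) ps) V1 V2.
Proof.
  intros [Hn1 [Hn2 [H1 H2]]]. unfold partial_bij, functional, transp. split; [|split].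
  - intros u v Hin. rewrite H1, H2. split; [apply (in_map fst) in Hin|apply (in_map snd) in Hin]; auto.
  - intros; eapply NoDup_map_fst_functional; eauto.
  - intros; eapply NoDup_map_snd_functional; eauto.
Qed.

Lemma aeq_item_alpha i : forall rho j, aeq_item rho i j -> alpha_item (rho_rel rho eq) i j.
Proof.
  induction i using item_ind_nested; intros rho j Hij; inversion Hij; subst.
  - constructor. apply aeq_form_iff; auto.
  - match goal with HB : bij_on _ _ _ |- _ => pose proof HB as [_ [_ [HB1 HB2]]] end.
    econstructor; [apply bij_on_partial_bij; eauto|eauto|].
    eapply Forall2_impl_Forall; eauto. simpl. intros a b Ha Hab.
    eapply alpha_item_mono; [|apply Ha; eauto]. intros u v Huv.
    destruct (rho_rel_app_incl _ _ _ u v Huv) as [?|[Hu [Hv Hr]]]; [left; auto|].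
    right. rewrite HB1, HB2. auto.
Qed.

Lemma compR_eq_l R : inclusion var (compR (transp var eq) R) R.
Proof. intros u w [v [Hv Hw]]. unfold transp in Hv. now subst. Qed.

Lemma compR_eq_r R : inclusion var (compR R eq) R.
Proof. intros u w [v [Hv Hw]]. now subst. Qed.

Lemma alpha_form_eq_l R A B C : alpha_form eq A B -> alpha_form R A C -> alpha_form R B C.
Proof.
  intros H1 H2. eapply alpha_form_mono; [apply compR_eq_l|].
  eapply alpha_form_comp; [apply alpha_form_transp|]; eauto.
Qed.

Lemma alpha_item_eq_l R i j k : alpha_item eq i j -> alpha_item R i k -> alpha_item R j k.
Proof.
  intros H1 H2. eapply alpha_item_mono; [apply compR_eq_l|].
  eapply alpha_item_comp; [apply alpha_item_transp|]; eauto.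
Qed.

Lemma alpha_item_eq_r R i j k : alpha_item R i j -> alpha_item eq j k -> alpha_item R i k.
Proof. intros H1 H2. eapply alpha_item_mono; [apply compR_eq_r|]. eapply alpha_item_comp; eauto. Qed.

Lemma alpha_form_eq_fv A B x : alpha_form eq A B -> In x (fv_form B) -> In x (fv_form A).
Proof.
  intros H Hx. destruct (alpha_form_fv _ _ _ _ (alpha_form_transp _ _ _ H) Hx) as [w [Hw Hin]].
  unfold transp in Hw. now subst.
Qed.

Lemma alpha_item_brack_mono R R' V G j :
  (forall u v, ~ In u V -> R u v -> R' u v) ->
  alpha_item R (IBrack V G) j -> alpha_item R' (IBrack V G) j.
Proof.
  intros HR H. inversion H; subst. econstructor; eauto.
  eapply Forall2_impl; [|eauto]. intros a b. apply alpha_item_mono.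
  unfold inclusion, ext_bracket. firstorder.
Qed.

Definition rename_by (C : relation var) (V : list var) : relation var :=
  fun u w => C u w \/ (~ In u V /\ u = w).

Lemma rename_by_functional C V :
  functional C -> (forall u w, C u w -> In u V) -> functional (rename_by C V).
Proof.
  intros HC HV u w1 w2 [H1|[H1 <-]] [H2|[H2 <-]]; eauto.
  - exfalso. eauto.
  - exfalso. eauto.
Qed.

Lemma ext_bracket_eq_incl C V1 V2 :
  inclusion var (ext_bracket V1 V2 C eq) (rename_by C V1).
Proof. intros u w [H|[H [_ <-]]]; [left|right]; auto. Qed.

Lemma transp_ext_bracket_eq_incl C V1 V2 :
  inclusion var (transp var (ext_bracket V1 V2 C eq)) (rename_by (transp var C) V2).
Proof. intros u w [H|[_ [H <-]]]; [left|right]; auto. Qed.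

(** * Erasing brackets *)

Definition ren_form (F : relation var) (A B : formula) : Prop :=
  exists R, alpha_form R A B /\ forall u w, In u (fv_form A) -> R u w -> F u w.

Definition ren_item (F : relation var) (i j : item) : Prop :=
  exists R, alpha_item R i j /\ forall u w, In u (fv_item i) -> R u w -> F u w.

Lemma ren_form_mono_fv F F' A B :
  (forall u w, In u (fv_form A) -> F u w -> F' u w) -> ren_form F A B -> ren_form F' A B.
Proof. intros HF [R [HR Hfv]]. exists R; eauto. Qed.

Lemma ren_item_mono_fv F F' i j :
  (forall u w, In u (fv_item i) -> F u w -> F' u w) -> ren_item F i j -> ren_item F' i j.
Proof. intros HF [R [HR Hfv]]. exists R; eauto. Qed.

Lemma ren_item_of_alpha F i j : alpha_item F i j -> ren_item F i j.
Proof. intros H. exists F; auto. Qed.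

Lemma ren_form_of_eq C V A B :
  alpha_form eq A B -> (forall u, In u (fv_form A) -> ~ In u V) -> ren_form (rename_by C V) A B.
Proof. intros H HV. exists eq. split; auto. intros u w Hu <-. right; auto. Qed.

Lemma ren_item_of_eq C V i j :
  alpha_item eq i j -> (forall u, In u (fv_item i) -> ~ In u V) -> ren_item (rename_by C V) i j.
Proof. intros H HV. exists eq. split; auto. intros u w Hu <-. right; auto. Qed.

(* [K] renames the bound variables [B] of the erased items, [F] their free
   variables. *)
Definition ren_list_bound (F : relation var) (B : list var) (L1 L2 : list formula) : Prop :=
  exists K L, functional K /\ (forall u w, K u w -> In u B) /\
    Permutation L2 L /\ Forall2 (ren_form (union var K F)) L1 L.

Lemma ren_list_bound_single F Bv A B : ren_form F A B -> ren_list_bound F Bv [A] [B].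
Proof.
  intros H. exists (fun _ _ => False), [B]. split; [|split; [|split]]; try easy.
  constructor; [|constructor]. eapply ren_form_mono_fv; [|exact H]. intros; right; auto.
Qed.

Lemma ren_list_bound_nil F : ren_list_bound F [] [] [].
Proof. exists (fun _ _ => False), []. repeat split; easy. Qed.

Lemma ren_list_bound_app F B1 B2 L1 L2 M1 M2 : NoDup (B1 ++ B2) ->
  ren_list_bound F B1 L1 L2 -> ren_list_bound F B2 M1 M2 ->
  ren_list_bound F (B1 ++ B2) (L1 ++ M1) (L2 ++ M2).
Proof.
  intros Hn [K1 [L [Hf1 [Hd1 [Hp1 Hq1]]]]] [K2 [M [Hf2 [Hd2 [Hp2 Hq2]]]]].
  exists (union var K1 K2), (L ++ M). split; [|split; [|split]].
  - intros u w1 w2 [Ha|Ha] [Hb|Hb]; eauto; exfalso; eapply NoDup_app_disjoint; eauto.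
  - intros u w [Ha|Ha]; apply in_or_app; eauto.
  - apply Permutation_app; auto.
  - apply Forall2_app; (eapply Forall2_impl; [|eassumption]); intros;
      (eapply ren_form_mono_fv; [|eassumption]); intros u w _ [Hk|Hk]; firstorder.
Qed.

Lemma ren_list_bound_perm F B L1 L2 L2' :
  Permutation L2 L2' -> ren_list_bound F B L1 L2' -> ren_list_bound F B L1 L2.
Proof.
  intros Hp [K [L [Hf [Hd [Hp' Hq]]]]]. exists K, L. repeat split; auto.
  eapply Permutation_trans; eauto.
Qed.

Lemma ren_list_bound_bind F C V B L1 L2 :
  functional C -> (forall u w, C u w -> In u V) -> NoDup (V ++ B) ->
  ren_list_bound (union var C F) B L1 L2 -> ren_list_bound F (V ++ B) L1 L2.
Proof.
  intros HC HCd Hn [K [L [Hf [Hd [Hp Hq]]]]].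
  exists (union var C K), L. split; [|split; [|split]]; auto.
  - intros u w1 w2 [Ha|Ha] [Hb|Hb]; eauto; exfalso; eapply NoDup_app_disjoint; eauto.
  - intros u w [Ha|Ha]; apply in_or_app; eauto.
  - eapply Forall2_impl; [|eassumption]. intros.
    eapply ren_form_mono_fv; [|eassumption]. intros u w _ Hu. firstorder.
Qed.

Lemma erase_ctx_ren_Forall F Xs Ys :
  Forall (fun i => forall F j, ren_item F i j -> NoDup (bv_item i) ->
            ren_list_bound F (bv_item i) (erase_item i) (erase_item j)) Xs ->
  Forall2 (ren_item F) Xs Ys -> NoDup (flat_map bv_item Xs) ->
  ren_list_bound F (flat_map bv_item Xs) (erase_ctx Xs) (erase_ctx Ys).
Proof.
  intros HXs HF. induction HF as [|i j Xs Ys Hij HF IH]; intros Hn.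
  - apply ren_list_bound_nil.
  - inversion HXs as [|? ? Hi HXs']; subst. simpl in Hn.
    apply ren_list_bound_app; auto.
    + apply Hi; auto. eapply NoDup_app_remove_r; eauto.
    + apply IH; auto. eapply NoDup_app_remove_l; eauto.
Qed.

Lemma erase_item_ren i : forall F j, ren_item F i j -> NoDup (bv_item i) ->
  ren_list_bound F (bv_item i) (erase_item i) (erase_item j).
Proof.
  induction i as [A|V G IH] using item_ind_nested; intros F j [R [Hij Hfv]] Hn;
    inversion Hij as [? ? B HAB|? ? V2 ? G2 G2' C HC HP HG]; subst.
  - apply ren_list_bound_single. exists R; auto.
  - destruct HC as [HCd [HCf _]]. simpl in Hn |- *.
    apply (ren_list_bound_bind F C); auto; [intros u w Hu; apply (HCd u w Hu)|].
    eapply ren_list_bound_perm; [apply Permutation_flat_map; exact HP|].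
    apply erase_ctx_ren_Forall; [exact IH| |eapply NoDup_app_remove_l; eauto].
    assert (Hsub : Forall (fun g => forall u, In u (fv_item g) -> In u (flat_map fv_item G)) G).
    { apply Forall_forall. intros g Hg u Hu. apply in_flat_map; eauto. }
    eapply Forall2_impl_Forall; [exact Hsub|exact HG|]. intros g g' Hg Hgg'.
    exists (ext_bracket V V2 C R). split; auto.
    intros u w Hu [Hc|[HuV [_ HR]]]; [left; auto|right].
    apply Hfv; auto. apply in_filter_notin; auto.
Qed.

Lemma erase_ctx_ren F Xs Ys : Forall2 (ren_item F) Xs Ys -> NoDup (flat_map bv_item Xs) ->
  ren_list_bound F (flat_map bv_item Xs) (erase_ctx Xs) (erase_ctx Ys).
Proof.
  apply erase_ctx_ren_Forall. apply Forall_forall. intros i _. apply erase_item_ren.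
Qed.

(** * Renaming substitutions and flattenings *)

Definition choice_fun (Q : relation var) : var -> var := fun u => epsilon (inhabits 0) (Q u).

Lemma choice_fun_spec Q u w : functional Q -> Q u w -> choice_fun Q u = w.
Proof. intros HQ H. apply (HQ u); auto. unfold choice_fun. apply epsilon_spec. eauto. Qed.

Lemma ren_form_subst Q A B :
  functional Q -> ren_form Q A B -> aeq_form [] (subst_form (choice_fun Q) A) B.
Proof.
  intros HQ [R [HR Hfv]]. apply aeq_form_iff. eapply alpha_form_subst; [exact HR|].
  intros x y Hx Hxy. simpl. apply choice_fun_spec; auto.
Qed.

Lemma ren_lj_seq_subst Q Γ Δ X Y E1 E2 : functional Q ->
  Permutation Γ X -> Permutation Δ Y -> Forall2 (ren_form Q) X Y -> ren_form Q E1 E2 ->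
  aeq_lj_seq (subst_lj_seq (choice_fun Q) (Γ, E1)) (Δ, E2).
Proof.
  intros HQ HPX HPY HF HE.
  destruct (Permutation_Forall2 (Permutation_sym HPX) HF) as [Y' [HY HF']].
  exists Y'. simpl. split; [eapply Permutation_trans; eauto|split].
  - clear -HF' HQ. induction HF'; simpl; constructor; auto. apply ren_form_subst; auto.
  - apply ren_form_subst; auto.
Qed.

(* What a flattening retains of the fresh α-variant it erases. *)
Definition fresh_erasure (Xs : list item) (S : lj_seq) : Prop :=
  Permutation (fst S) (erase_ctx Xs) /\ NoDup (flat_map bv_item Xs) /\
  forall u, In u (flat_map fv_item Xs) \/ In u (fv_form (snd S)) ->
    ~ In u (flat_map bv_item Xs).

Lemma flattening_inv Cs A S : flattening (Cs, A) S ->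
  exists Xs, Forall2 (alpha_item eq) Cs Xs /\ alpha_form eq A (snd S) /\ fresh_erasure Xs S.
Proof.
  intros [[C' E'] [[[Xs [HP [HF HE]]] [HN Hfr]] [HPS HS]]]; simpl in *.
  assert (Hbv : Permutation (flat_map bv_item C') (flat_map bv_item Xs))
    by (apply Permutation_flat_map; exact HP).
  assert (Hfv : Permutation (flat_map fv_item C') (flat_map fv_item Xs))
    by (apply Permutation_flat_map; exact HP).
  exists Xs. split; [|split; [|split; [|split]]].
  - eapply Forall2_impl; [|exact HF]. intros i j. apply aeq_item_alpha.
  - rewrite HS. exact (proj1 (aeq_form_iff _ _ _) HE).
  - eapply Permutation_trans; [exact HPS|]. apply Permutation_flat_map. exact HP.
  - eapply Permutation_NoDup; [exact Hbv|]. eapply NoDup_app_remove_r. exact HN.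
  - intros u Hu Hb. apply (Hfr u).
    + apply in_or_app. left. eapply Permutation_in; [apply Permutation_sym, Hbv|exact Hb].
    + unfold fv_ljb_seq. simpl. rewrite <- HS. apply in_or_app.
      destruct Hu as [Hu|Hu]; [left|right; exact Hu].
      eapply Permutation_in; [apply Permutation_sym, Hfv|exact Hu].
Qed.

Lemma fresh_erasure_open V G G' Xs S : Permutation G G' ->
  fresh_erasure (IBrack V G :: Xs) S ->
  fresh_erasure (G' ++ Xs) S /\
  forall u, In u (flat_map fv_item Xs) \/ In u (fv_form (snd S)) -> ~ In u V.
Proof.
  intros HG [HP [HN Hfr]]. simpl in HN, Hfr.
  rewrite <- app_assoc in HN, Hfr.
  assert (Hbv : Permutation (flat_map bv_item (G ++ Xs)) (flat_map bv_item (G' ++ Xs)))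
    by (apply Permutation_flat_map, Permutation_app_tail, HG).
  assert (Hfv : Permutation (flat_map fv_item G) (flat_map fv_item G'))
    by (apply Permutation_flat_map, HG).
  rewrite flat_map_app in Hbv.
  split; [split; [|split]|].
  - eapply Permutation_trans; [exact HP|]. simpl. unfold erase_ctx.
    rewrite flat_map_app. apply Permutation_app_tail, Permutation_flat_map, HG.
  - eapply Permutation_NoDup; [exact Hbv|]. eapply NoDup_app_remove_l. exact HN.
  - intros u Hu Hb. apply (Permutation_in _ (Permutation_sym Hbv)) in Hb.
    rewrite flat_map_app in Hu.
    destruct Hu as [Hu|Hu]; [apply in_app_or in Hu as [Hu|Hu]|].
    + destruct (In_dec Nat.eq_dec u V) as [HuV|HuV].
      * eapply NoDup_app_disjoint; eauto.
      * apply (Hfr u); [left; apply in_or_app; left; apply in_filter_notin|apply in_or_app; auto].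
        split; auto. eapply Permutation_in; [apply Permutation_sym, Hfv|exact Hu].
    + apply (Hfr u); [left; apply in_or_app; auto|apply in_or_app; auto].
    + apply (Hfr u); [right; exact Hu|apply in_or_app; auto].
  - intros u Hu HuV. apply (Hfr u); [|apply in_or_app; auto].
    destruct Hu; [left; apply in_or_app|right]; auto.
Qed.

Lemma fresh_erasure_subst F Xs Ys S T :
  functional F -> Forall2 (ren_item F) Xs Ys -> ren_form F (snd S) (snd T) ->
  fresh_erasure Xs S -> Permutation (fst T) (erase_ctx Ys) ->
  exists s, aeq_lj_seq (subst_lj_seq s S) T.
Proof.
  intros HF HXY HE [HP [HN Hfr]] HPT.
  set (Bv := flat_map bv_item Xs).
  set (F' := fun u w => ~ In u Bv /\ F u w).
  assert (HXY' : Forall2 (ren_item F') Xs Ys).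
  { assert (Hsub : Forall (fun i => forall u, In u (fv_item i) -> In u (flat_map fv_item Xs)) Xs).
    { apply Forall_forall. intros i Hi u Hu. apply in_flat_map; eauto. }
    eapply Forall2_impl_Forall; [exact Hsub|exact HXY|]. intros i j Hi.
    apply ren_item_mono_fv. intros u w Hu Huw. split; auto. }
  destruct (erase_ctx_ren _ _ _ HXY' HN) as [K [L [HK [HKd [HPL HL]]]]].
  assert (HQ : functional (union var K F')).
  { intros u w1 w2 [H1|[Hb1 H1]] [H2|[Hb2 H2]]; eauto; exfalso; eauto. }
  exists (choice_fun (union var K F')). destruct S as [Γ E1], T as [Δ E2]. simpl in *.
  apply (ren_lj_seq_subst _ Γ Δ (erase_ctx Xs) L); auto.
  - eapply Permutation_trans; eauto.
  - eapply ren_form_mono_fv; [|exact HE]. intros u w Hu Huw. right. split; auto.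
Qed.

Lemma subst_unbracketed_to_bracketed V V2 C G Gs1 Gs2 D j1 j2 A S T :
  partial_bij C V V2 -> (forall x, In x V -> ~ In x (fv_form A)) ->
  Forall2 (alpha_item eq) G Gs1 -> Forall2 (alpha_item (ext_bracket V V2 C eq)) G Gs2 ->
  alpha_item eq (IBrack V D) j1 -> alpha_item eq (IBrack V D) j2 ->
  alpha_form eq A (snd S) -> alpha_form eq A (snd T) ->
  fresh_erasure (Gs1 ++ [j1]) S -> Permutation (fst T) (erase_ctx (Gs2 ++ [j2])) ->
  exists s, aeq_lj_seq (subst_lj_seq s S) T.
Proof.
  intros [HCd [HCf _]] HV HG1 HG2 HD1 HD2 HA1 HA2 Hfr HPT.
  apply (fresh_erasure_subst (rename_by C V) (Gs1 ++ [j1]) (Gs2 ++ [j2])); auto.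
  - apply rename_by_functional; auto. intros u w Hu; apply (HCd u w Hu).
  - apply Forall2_app; [|constructor; [|constructor]].
    + eapply Forall2_impl; [|exact (Forall2_from_common _ _ _ _ _ HG1 HG2)].
      intros g1 g2 [g [Hg1 Hg2]]. apply ren_item_of_alpha.
      eapply alpha_item_eq_l; [exact Hg1|]. eapply alpha_item_mono; [|exact Hg2].
      apply ext_bracket_eq_incl.
    + apply ren_item_of_alpha. eapply alpha_item_eq_l; [exact HD1|].
      eapply alpha_item_brack_mono; [|exact HD2]. intros u v Hu <-. right; auto.
  - apply ren_form_of_eq; [eapply alpha_form_eq_l; eauto|].
    intros u Hu HuV. apply (HV u HuV). exact (alpha_form_eq_fv _ _ _ HA1 Hu).
Qed.

Lemma subst_bracketed_to_unbracketed V V2 C G Gs1 Gs2 D j1 j2 A S T :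
  partial_bij C V V2 ->
  Forall2 (alpha_item eq) G Gs1 -> Forall2 (alpha_item (ext_bracket V V2 C eq)) G Gs2 ->
  alpha_item eq (IBrack V D) j1 -> alpha_item eq (IBrack V D) j2 ->
  alpha_form eq A (snd S) -> alpha_form eq A (snd T) ->
  fresh_erasure (Gs2 ++ [j2]) S ->
  (forall u, In u (flat_map fv_item [j2]) \/ In u (fv_form (snd S)) -> ~ In u V2) ->
  Permutation (fst T) (erase_ctx (Gs1 ++ [j1])) ->
  exists s, aeq_lj_seq (subst_lj_seq s S) T.
Proof.
  intros HC HG1 HG2 HD1 HD2 HA1 HA2 Hfr HV2 HPT.
  destruct (partial_bij_transp _ _ _ HC) as [HCd [HCf _]].
  apply (fresh_erasure_subst (rename_by (transp var C) V2) (Gs2 ++ [j2]) (Gs1 ++ [j1])); auto.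
  - apply rename_by_functional; auto. intros u w Hu; apply (HCd u w Hu).
  - apply Forall2_app; [|constructor; [|constructor]].
    + eapply Forall2_impl; [|exact (Forall2_from_common _ _ _ _ _ HG2 HG1)].
      intros g2 g1 [g [Hg2 Hg1]]. apply ren_item_of_alpha.
      eapply alpha_item_eq_r; [|exact Hg1]. eapply alpha_item_mono; [|apply alpha_item_transp, Hg2].
      apply transp_ext_bracket_eq_incl.
    + apply ren_item_of_eq; [eapply alpha_item_eq_l; eauto|].
      intros u Hu. apply HV2. left. simpl. rewrite app_nil_r. exact Hu.
  - apply ren_form_of_eq; [eapply alpha_form_eq_l; eauto|].
    intros u Hu. apply HV2. right. exact Hu.
Qed.

Theorem proposition5 (G D : ljb_ctx) (A : formula) (V : list var) :
  (forall x, In x V -> ~ In x (fv_form A)) ->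
  forall S1 S2 : lj_seq,
    flattening (G ++ [IBrack V D], A) S1 ->
    flattening ([IBrack V G; IBrack V D], A) S2 ->
    abar_equiv S1 S2.
Proof.
  intros HV S1 S2 H1 H2.
  destruct (flattening_inv _ _ _ H1) as [Xs1 [HX1 [HA1 Hfr1]]].
  destruct (flattening_inv _ _ _ H2) as [Xs2 [HX2 [HA2 Hfr2]]].
  apply Forall2_app_inv_l in HX1 as [Gs1 [Ds1 [HG1 [HD1 ->]]]].
  inversion HD1 as [|? j1 ? ? Hj1 Hnil1]; inversion Hnil1; subst.
  inversion HX2 as [|? b ? ? Hb HX2']; subst.
  inversion HX2' as [|? j2 ? ? Hj2 Hnil2]; inversion Hnil2; subst.
  inversion Hb as [|? ? V2 ? G2 Gs2 C HC HPG HG2]; subst.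
  destruct (fresh_erasure_open _ _ _ _ _ HPG Hfr2) as [Hfr2' HV2].
  pose proof (proj1 Hfr1) as HP1. pose proof (proj1 Hfr2') as HP2.
  destruct (subst_unbracketed_to_bracketed V V2 C G Gs1 Gs2 D j1 j2 A S1 S2)
    as [s Hs]; auto.
  destruct (subst_bracketed_to_unbracketed V V2 C G Gs1 Gs2 D j1 j2 A S2 S1)
    as [s' Hs']; auto.
  exists s, s'. auto.
Qed.
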